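(* For all terms $s,t$ over $\Sigma_{SCL}(A)$ (possibly containing variables), if $\mathrm{EqFSCL}\vdash s=t$ then $\mathbb M_{se}\models s=t$, i.e. $s$ and $t$ have equal interpretations in $\mathbb M_{se}$ under every assignment of elements of the domain of $\mathbb M_{se}$ to the variables.
   Context: Let $A$ be a nonempty set of atoms. The signature $\Sigma_{SCL}(A)$ consists of the constants $\mathsf T,\mathsf F$, each atom $a\in A$ as a constant, unary negation $\neg$, and two binary connectives written $x\land^\circ y$ (left-sequential, short-circuit conjunction) and $x\lor^\circ y$ (left-sequential, short-circuit disjunction). $\mathcal S_A$ denotes the set of closed terms over $\Sigma_{SCL}(A)$. EqFSCL is the following set of equations in variables $x,y,z$: (F1) $\mathsf F=\neg\mathsf T$; (F2) $x\lor^\circ y=\neg(\neg x\land^\circ\neg y)$; (F3) $\neg\neg x=x$; (F4) $\mathsf T\land^\circ x=x$; (F5) $x\lor^\circ\mathsf F=x$; (F6) $\mathsf F\land^\circ x=\mathsf F$; (F7) $(x\land^\circ y)\land^\circ z=x\land^\circ(y\land^\circ z)$; (F8) $\neg x\land^\circ\mathsf F=x\land^\circ\mathsf F$; (F9) $(x\land^\circ\mathsf F)\lor^\circ y=(x\lor^\circ\mathsf T)\land^\circ y$; (F10) $(x\land^\circ y)\lor^\circ(z\land^\circ\mathsf F)=(x\lor^\circ(z\land^\circ\mathsf F))\land^\circ(y\lor^\circ(z\land^\circ\mathsf F))$. $E\vdash s=t$ means $s=t$ is derivable from the equations $E$ in equational logic (reflexivity, symmetry, transitivity, congruence, substitution).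 Evaluation trees: the set $\mathcal T_A$ is defined inductively by $\mathsf T,\mathsf F\in\mathcal T_A$ and $(X\unlhd a\unrhd Y)\in\mathcal T_A$ for $X,Y\in\mathcal T_A$, $a\in A$ (a binary tree with root labelled $a$, left branch $X$, right branch $Y$, leaves labelled $\mathsf T$ or $\mathsf F$). Leaf replacement is defined by $\mathsf T[\mathsf T\mapsto Y,\mathsf F\mapsto Z]=Y$, $\mathsf F[\mathsf T\mapsto Y,\mathsf F\mapsto Z]=Z$, $(X_1\unlhd a\unrhd X_2)[\mathsf T\mapsto Y,\mathsf F\mapsto Z]=X_1[\mathsf T\mapsto Y,\mathsf F\mapsto Z]\unlhd a\unrhd X_2[\mathsf T\mapsto Y,\mathsf F\mapsto Z]$; an omitted replacement is the identity (e.g. $X[\mathsf T\mapsto Y]=X[\mathsf T\mapsto Y,\mathsf F\mapsto\mathsf F]$). The short-circuit evaluation function $se:\mathcal S_A\to\mathcal T_A$ is: $se(\mathsf T)=\mathsf T$, $se(\mathsf F)=\mathsf F$, $se(a)=\mathsf T\unlhd a\unrhd\mathsf F$, $se(\neg P)=se(P)[\mathsf T\mapsto\mathsf F,\mathsf F\mapsto\mathsf T]$, $se(P\land^\circ Q)=se(P)[\mathsf T\mapsto se(Q)]$, $se(P\lor^\circ Q)=se(P)[\mathsf F\mapsto se(Q)]$. The model $\mathbb M_{se}$ is the $\Sigma_{SCL}(A)$-algebra with domain $\{se(P)\mid P\in\mathcal S_A\}$, interpreting $\mathsf T,\mathsf F,a$ as $\mathsf T$, $\mathsf F$, $\mathsf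 T\unlhd a\unrhd\mathsf F$, and $\neg X=X[\mathsf T\mapsto\mathsf F,\mathsf F\mapsto\mathsf T]$, $X\land^\circ Y=X[\mathsf T\mapsto Y]$, $X\lor^\circ Y=X[\mathsf F\mapsto Y]$. (For closed $P$, the interpretation of $P$ in $\mathbb M_{se}$ is $se(P)$.) *)

Set Implicit Arguments.

Section SCL.
Variable A : Type.

Inductive cterm : Type :=
| cT | cF | cAt (a : A) | cNeg (P : cterm)
| cAnd (P Q : cterm) | cOr (P Q : cterm).

Inductive term : Type :=
| Var (n : nat) | tT | tF | tAt (a : A) | tNeg (t : term)
| tAnd (s t : term) | tOr (s t : term).

Inductive tree : Type :=
| LT | LF | Node (X : tree) (a : A) (Y : tree).

Fixpoint repl (X Y Z : tree) : tree :=
  match X with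
  | LT => Y
  | LF => Z
  | Node X1 a X2 => Node (repl X1 Y Z) a (repl X2 Y Z)
  end.

Fixpoint se (P : cterm) : tree :=
  match P with
  | cT => LT
  | cF => LF
  | cAt a => Node LT a LF
  | cNeg P => repl (se P) LF LT
  | cAnd P Q => repl (se P) (se Q) LF
  | cOr P Q => repl (se P) LT (se Q)
  end.

Definition in_Mse (X : tree) : Prop := exists P : cterm, X = se P.

Fixpoint interp (rho : nat -> tree) (t : term) : tree :=
  match t with
  | Var n => rho n
  | tT => LT
  | tF => LF
  | tAt a => Node LT a LF
  | tNeg s => repl (interp rho s) LF LT
  | tAnd s u => repl (interp rho s) (interp rho u) LF
  | tOr s u => repl (interp rho s) LT (interp rho u)
  end.

Definition Mse_models (s t : term) : Prop :=
  forall rho : nat -> tree, (forall n, in_Mse (rho n)) -> interp rho s = interp rho t.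

Fixpoint subst (sigma : nat -> term) (t : term) : term :=
  match t with
  | Var n => sigma n
  | tT => tT
  | tF => tF
  | tAt a => tAt a
  | tNeg s => tNeg (subst sigma s)
  | tAnd s u => tAnd (subst sigma s) (subst sigma u)
  | tOr s u => tOr (subst sigma s) (subst sigma u)
  end.

Let x := Var 0.
Let y := Var 1.
Let z := Var 2.

Inductive EqFSCL : term -> term -> Prop :=
| F1 : EqFSCL tF (tNeg tT)
| F2 : EqFSCL (tOr x y) (tNeg (tAnd (tNeg x) (tNeg y)))
| F3 : EqFSCL (tNeg (tNeg x)) x
| F4 : EqFSCL (tAnd tT x) x
| F5 : EqFSCL (tOr x tF) x
| F6 : EqFSCL (tAnd tF x) tF
| F7 : EqFSCL (tAnd (tAnd x y) z) (tAnd x (tAnd y z))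
| F8 : EqFSCL (tAnd (tNeg x) tF) (tAnd x tF)
| F9 : EqFSCL (tOr (tAnd x tF) y) (tAnd (tOr x tT) y)
| F10 : EqFSCL (tOr (tAnd x y) (tAnd z tF))
               (tAnd (tOr x (tAnd z tF)) (tOr y (tAnd z tF))).

Inductive derivable (E : term -> term -> Prop) : term -> term -> Prop :=
| d_ax : forall s t, E s t -> derivable E s t
| d_refl : forall t, derivable E t t
| d_sym : forall s t, derivable E s t -> derivable E t s
| d_trans : forall s t u, derivable E s t -> derivable E t u -> derivable E s u
| d_neg : forall s t, derivable E s t -> derivable E (tNeg s) (tNeg t)
| d_and : forall s1 t1 s2 t2, derivable E s1 t1 -> derivable E s2 t2 ->
    derivable E (tAnd s1 s2) (tAnd t1 t2)
| d_or : forall s1 t1 s2 t2, derivable E s1 t1 -> derivable E s2 t2 ->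
    derivable E (tOr s1 s2) (tOr t1 t2)
| d_subst : forall sigma s t, derivable E s t ->
    derivable E (subst sigma s) (subst sigma t).

End SCL.


(* Leaf replacement is associative and has [X[T |-> T, F |-> F] = X]; with these
   two identities every axiom of EqFSCL becomes an equality that holds for
   arbitrary trees.  Since interpretation commutes with substitution, validity
   under every assignment is preserved by all rules of equational logic. *)

Section Soundness.

Context {A : Type}.

Lemma repl_assoc (X Y Z U V : tree A) :
  repl (repl X Y Z) U V = repl X (repl Y U V) (repl Z U V).
Proof. induction X; simpl; congruence. Qed.

Lemma repl_LT_LF (X : tree A) : repl X (LT A) (LF A) = X.
Proof. induction X; simpl; congruence. Qed.

Lemma interp_subst (rho : nat -> tree A) (sigma : nat -> term A) (t : term A) :
  interp rho (subst sigma t) = interp (fun n => interp rho (sigma n)) t.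
Proof. induction t; simpl; congruence. Qed.

Lemma EqFSCL_valid {s t : term A} :
  EqFSCL s t -> forall rho, interp rho s = interp rho t.
Proof.
  intros Hst rho; destruct Hst; simpl;
    rewrite ?repl_assoc; simpl; rewrite ?repl_assoc, ?repl_LT_LF; reflexivity.
Qed.

Lemma derivable_EqFSCL_valid {s t : term A} :
  derivable (@EqFSCL A) s t -> forall rho, interp rho s = interp rho t.
Proof.
  induction 1 as [s t Hax | | | | | | | sigma s t _ IH]; intro rho; simpl;
    try congruence.
  - exact (EqFSCL_valid Hax rho).
  - rewrite !interp_subst; apply IH.
Qed.

End Soundness.

Theorem theorem2p3 (A : Type) (HA : inhabited A) (s t : term A) :
  derivable (@EqFSCL A) s t -> Mse_models s t.
Proof.
  intros Hst rho _.
  exact (derivable_EqFSCL_valid Hst rho).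
Qed.
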